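(* Let $H$ be an $r$-cross-free hypergraph on $V=[n]$. Then $$\mathrm{cl}_r(H)=\mathrm{cl}_r(\emptyset)\cup\bigcup_{A\in H}\{A,\overline A\},$$ where $\emptyset$ is the hypergraph on $V$ with no hyperedges. As a consequence, $|\mathrm{cl}_r(H)|\le 2(r+1)n^r+2|H|$.
   Context: Hypergraphs on $V$ are identified with their hyperedge sets, and $|H|$ is the number of hyperedges; $\overline A=V\setminus A$. $\mathcal K_r(n)$ is the class of hypergraphs $\mathcal E$ on $V$ satisfying: (R0) every $X\subseteq V$ with $|X|\le r$ is in $\mathcal E$; (R1) $A\in\mathcal E\Rightarrow V\setminus A\in\mathcal E$; (R2) $A,B\in\mathcal E$ and $|A\cap B|\ge r\Rightarrow A\cup B\in\mathcal E$. $\mathcal K^0_r(n)$ is the class satisfying (R0) and (R1) only. $\mathrm{cl}_r(H)$ (resp. $\mathrm{cl}^0_r(H)$) is the intersection of all hypergraphs in $\mathcal K_r(n)$ (resp. $\mathcal K^0_r(n)$) containing $H$. $A,B\subseteq V$ are $r$-orthogonal if $\mathrm{cl}_r(\{A,B\})=\mathrm{cl}^0_r(\{A,B\})$. $H$ is $r$-cross-free if every pair of its hyperedges is $r$-orthogonal. *)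

From mathcomp Require Import all_boot.
Set Implicit Arguments. Unset Strict Implicit. Unset Printing Implicit Defensive.

(* Vertex set V = [n] is modelled as 'I_n; a hypergraph on V is its set of
   hyperedges, a {set {set 'I_n}}. Complement of A is ~: A. *)

Definition R0 (n r : nat) (E : {set {set 'I_n}}) : bool :=
  [forall X : {set 'I_n}, (#|X| <= r) ==> (X \in E)].
Definition R1 (n : nat) (E : {set {set 'I_n}}) : bool :=
  [forall A in E, (~: A) \in E].
Definition R2 (n r : nat) (E : {set {set 'I_n}}) : bool :=
  [forall A in E, forall B in E, (r <= #|A :&: B|) ==> ((A :|: B) \in E)].

Definition inK (n r : nat) (E : {set {set 'I_n}}) : bool :=
  [&& R0 r E, R1 E & R2 r E].
Definition inK0 (n r : nat) (E : {set {set 'I_n}}) : bool :=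
  R0 r E && R1 E.

Definition cl (n r : nat) (H : {set {set 'I_n}}) : {set {set 'I_n}} :=
  [set X | [forall E : {set {set 'I_n}}, (inK r E && (H \subset E)) ==> (X \in E)]].
Definition cl0 (n r : nat) (H : {set {set 'I_n}}) : {set {set 'I_n}} :=
  [set X | [forall E : {set {set 'I_n}}, (inK0 r E && (H \subset E)) ==> (X \in E)]].

Definition orthogonal (n r : nat) (A B : {set 'I_n}) : bool :=
  cl r [set A; B] == cl0 r [set A; B].
Definition cross_free (n r : nat) (H : {set {set 'I_n}}) : bool :=
  [forall A in H, forall B in H, orthogonal r A B].

From mathcomp Require Import all_boot.

Set Implicit Arguments.
Unset Strict Implicit.
Unset Printing Implicit Defensive.

(* The hypergraph T(H) made of the sets X with |X| <= r or |~X| <= r together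
   with all A and ~A for A in H always satisfies (R0) and (R1), and it lies
   below cl_r(H).  For (R2), a union X :|: Y with |X :&: Y| >= r in which X is
   small equals Y, and one in which X is co-small is co-small.  Otherwise
   X is A or ~A and Y is B or ~B for A, B in H, so X :|: Y lies in
   cl_r({A, B}) = cl^0_r({A, B}), which is contained in T(H) because T(H) is
   in K^0_r(n).  Hence cl_r(H) = T(H), and the case H = set0 identifies the
   first part.  The bound counts the sets of size at most r and their
   complements. *)

Lemma leq_bin_exp m k : 'C(m, k) <= m ^ k.
Proof.
rewrite -(leq_pmul2r (fact_gt0 k)) bin_ffact ffact_prod.
apply: (@leq_trans (\prod_(i < k) m)); last first.
  by rewrite prod_nat_const card_ord leq_pmulr ?fact_gt0.
by apply: leq_prod => i _; apply: leq_subr.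
Qed.

Lemma card_small_sets (T : finType) k :
  0 < #|T| -> #|[set A : {set T} | #|A| <= k]| <= k.+1 * #|T| ^ k.
Proof.
move=> T_gt0; elim: k => [|k IHk].
  have -> : [set A : {set T} | #|A| <= 0] = [set A : {set T} | #|A| == 0].
    by apply/setP => A; rewrite !inE leqn0.
  by rewrite card_draws bin0.
have -> : [set A : {set T} | #|A| <= k.+1] =
          [set A : {set T} | #|A| == k.+1] :|: [set A : {set T} | #|A| <= k].
  by apply/setP => A; rewrite !inE leq_eqVlt ltnS.
apply: leq_trans (leq_card_setU _ _) _.
rewrite card_draws mulSn leq_add ?leq_bin_exp //.
by apply: leq_trans IHk _; rewrite leq_mul2l leq_pexp2l ?orbT.
Qed.

Lemma card_setU_imset (T : finType) (f : T -> T) (P : {set T}) :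
  #|P :|: f @: P| <= 2 * #|P|.
Proof.
apply: leq_trans (leq_card_setU _ _) _.
by rewrite mul2n -addnn leq_add2l leq_imset_card.
Qed.

Section Closure.

Variables n r : nat.
Implicit Types (E H : {set {set 'I_n}}) (A B X Y : {set 'I_n}).

Lemma inK0P E :
  reflect ((forall X, #|X| <= r -> X \in E) /\ (forall X, X \in E -> ~: X \in E))
          (inK0 r E).
Proof.
apply: (iffP andP) => [[/forallP R0E /forall_inP R1E]|[R0E R1E]].
  by split=> // X; apply/implyP.
by split; [apply/forallP => X; apply/implyP/R0E | apply/forall_inP].
Qed.

Lemma inKP E :
  reflect [/\ forall X, #|X| <= r -> X \in E,
              forall X, X \in E -> ~: X \in E &
              forall X Y, X \in E -> Y \in E -> r <= #|X :&: Y| -> X :|: Y \in E]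
          (inK r E).
Proof.
apply: (iffP and3P) => [[R0E R1E /forall_inP R2E]|[R0E R1E R2E]].
  have /inK0P[R0E' R1E'] : inK0 r E by apply/andP.
  by split=> // X Y XE YE; have /forall_inP/(_ Y YE)/implyP := R2E X XE.
have /andP[R0E' R1E'] : inK0 r E by apply/inK0P.
by split=> //; apply/forall_inP => X XE; apply/forall_inP => Y YE; apply/implyP/R2E.
Qed.

Lemma inK_inK0 E : inK r E -> inK0 r E.
Proof. by case/and3P => R0E R1E _; apply/andP. Qed.

Lemma cl_min H E : inK r E -> H \subset E -> cl r H \subset E.
Proof.
move=> KE HE; apply/subsetP => X; rewrite inE => /forallP/(_ E)/implyP.
by apply; rewrite KE HE.
Qed.

Lemma cl0_min H E : inK0 r E -> H \subset E -> cl0 r H \subset E.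
Proof.
move=> KE HE; apply/subsetP => X; rewrite inE => /forallP/(_ E)/implyP.
by apply; rewrite KE HE.
Qed.

Lemma sub_cl H : H \subset cl r H.
Proof.
apply/subsetP => X HX; rewrite inE; apply/forallP => E; apply/implyP.
by case/andP => _ /subsetP; apply.
Qed.

Lemma cl_inK H : inK r (cl r H).
Proof.
have memE X E : X \in cl r H -> inK r E -> H \subset E -> X \in E.
  by move=> clX KE HE; exact: (subsetP (cl_min KE HE)) _ clX.
apply/inKP; split=> [X smallX | X clX | X Y clX clY XYr];
  rewrite inE; apply/forallP => E; apply/implyP => /andP[KE HE];
  have [R0E R1E R2E] := inKP _ KE.
- exact: R0E.
- exact/R1E/memE.
- exact: R2E (memE _ _ clX KE HE) (memE _ _ clY KE HE) XYr.
Qed.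

Definition small_or_cosmall : {set {set 'I_n}} :=
  [set X : {set 'I_n} | (#|X| <= r) || (#|~: X| <= r)].

Lemma small_or_cosmallC X : X \in small_or_cosmall -> ~: X \in small_or_cosmall.
Proof. by rewrite !inE setCK orbC. Qed.

Lemma small_or_cosmall_sub E : inK0 r E -> small_or_cosmall \subset E.
Proof.
case/inK0P => R0E R1E; apply/subsetP => X; rewrite inE => /orP[smallX|smallCX].
  exact: R0E.
by rewrite -(setCK X); apply/R1E/R0E.
Qed.

(* A set of size at most r meeting Y in at least r elements lies inside Y. *)
Lemma setU_small_or_cosmall X Y :
  X \in small_or_cosmall -> r <= #|X :&: Y| ->
  X :|: Y = Y \/ X :|: Y \in small_or_cosmall.
Proof.
rewrite inE => /orP[smallX|smallCX] XYr.
  left; apply/setUidPr/setIidPl/eqP.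
  by rewrite eqEcard subsetIl (leq_trans smallX XYr).
right; rewrite inE; apply/orP; right; apply: leq_trans smallCX.
by rewrite subset_leq_card // setCU subsetIl.
Qed.

Lemma setU_small_or_cosmall_mem E X Y :
  small_or_cosmall \subset E -> X \in small_or_cosmall -> Y \in E ->
  r <= #|X :&: Y| -> X :|: Y \in E.
Proof.
move=> /subsetP sub_E sX YE XYr.
by case: (setU_small_or_cosmall sX XYr) => [->|/sub_E].
Qed.

Lemma small_or_cosmall_inK : inK r small_or_cosmall.
Proof.
apply/inKP; split=> [X smallX | | X Y sX sY XYr]; first by rewrite inE smallX.
  exact: small_or_cosmallC.
exact: setU_small_or_cosmall_mem.
Qed.

Lemma cl_set0 : cl r set0 = small_or_cosmall.
Proof.
apply/eqP; rewrite eqEsubset cl_min ?small_or_cosmall_inK ?sub0set //.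
exact/small_or_cosmall_sub/inK_inK0/cl_inK.
Qed.

Definition compl_pairs H := \bigcup_(A in H) [set A; ~: A].

Lemma compl_pairsP H X :
  reflect (exists2 A, A \in H & (X == A) || (X == ~: A)) (X \in compl_pairs H).
Proof.
by apply: (iffP bigcupP) => -[A HA XA]; exists A; rewrite // !inE in XA *.
Qed.

Lemma sub_compl_pairs H : H \subset compl_pairs H.
Proof. by apply/subsetP => A HA; apply/compl_pairsP; exists A; rewrite ?eqxx. Qed.

Lemma compl_pairs_sub_cl H : compl_pairs H \subset cl r H.
Proof.
have [_ R1cl _] := inKP _ (cl_inK H).
apply/subsetP => X /compl_pairsP[A /(subsetP (sub_cl H)) clA].
by case/orP => /eqP ->; last apply: R1cl.
Qed.

Definition explicit_cl H := small_or_cosmall :|: compl_pairs H.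

Lemma sub_explicit_cl H : H \subset explicit_cl H.
Proof. exact: subset_trans (sub_compl_pairs H) (subsetUr _ _). Qed.

Lemma explicit_cl_inK0 H : inK0 r (explicit_cl H).
Proof.
apply/inK0P; split=> [X smallX | X]; first by rewrite !inE smallX.
case/setUP => [/small_or_cosmallC sCX | /compl_pairsP[A HA XA]].
  by rewrite inE sCX.
rewrite inE; apply/orP; right; apply/compl_pairsP; exists A => //.
by case/orP: XA => /eqP ->; rewrite ?setCK eqxx ?orbT.
Qed.

Lemma explicit_cl_inK H : cross_free r H -> inK r (explicit_cl H).
Proof.
move=> /forall_inP orthoH; have [R0T R1T] := inK0P _ (explicit_cl_inK0 H).
have sub_T : small_or_cosmall \subset explicit_cl H by apply: subsetUl.
apply/inKP; split=> // X Y XT YT XYr.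
case/setUP: (XT) => [sX|]; first exact: setU_small_or_cosmall_mem.
case/setUP: (YT) => [sY _|].
  by rewrite setUC; apply: setU_small_or_cosmall_mem; rewrite // setIC.
move=> /compl_pairsP[B HB YB] /compl_pairsP[A HA XA].
have pair_cl Z C : C \in [set A; B] -> (Z == C) || (Z == ~: C) ->
    Z \in cl r [set A; B].
  by move=> ABC ZC; apply/(subsetP (compl_pairs_sub_cl _))/compl_pairsP; exists C.
have [_ _ R2cl] := inKP _ (cl_inK [set A; B]).
have : X :|: Y \in cl r [set A; B].
  by apply: R2cl XYr; [apply: pair_cl XA | apply: pair_cl YB]; rewrite !inE eqxx ?orbT.
have /forall_inP/(_ B HB)/eqP -> := orthoH A HA.
have AB_H : [set A; B] \subset H.
  by apply/subsetP => C; rewrite !inE => /orP[] /eqP ->.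
apply/subsetP/cl0_min; first exact: explicit_cl_inK0.
exact: subset_trans AB_H (sub_explicit_cl H).
Qed.

Lemma cl_cross_free H : cross_free r H -> cl r H = explicit_cl H.
Proof.
move=> crossH; apply/eqP; rewrite eqEsubset cl_min ?explicit_cl_inK //; last first.
  exact: sub_explicit_cl.
by rewrite subUset compl_pairs_sub_cl small_or_cosmall_sub ?inK_inK0 ?cl_inK.
Qed.

Lemma card_compl_pairs H : #|compl_pairs H| <= 2 * #|H|.
Proof.
apply: leq_trans (card_setU_imset (@setC _) H); apply: subset_leq_card.
apply/subsetP => X /compl_pairsP[A HA /orP[] /eqP ->]; rewrite inE ?HA //.
by rewrite imset_f ?orbT.
Qed.

Lemma card_small_or_cosmall : 0 < n -> #|small_or_cosmall| <= 2 * (r + 1) * n ^ r.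
Proof.
move=> n_gt0; set P := [set X : {set 'I_n} | #|X| <= r].
have sub_P : small_or_cosmall \subset P :|: [set ~: X | X in P].
  apply/subsetP => X; rewrite !inE => /orP[smallX|smallCX].
    by rewrite smallX.
  by rewrite -(setCK X) imset_f ?orbT // inE.
apply: leq_trans (subset_leq_card sub_P) (leq_trans (card_setU_imset _ _) _).
rewrite addn1 -mulnA leq_mul2l /=.
by have := @card_small_sets 'I_n r; rewrite card_ord; apply.
Qed.

End Closure.

Theorem mainTheorem16 (n r : nat) (H : {set {set 'I_n}}) :
  cross_free r H ->
  cl r H = cl r set0 :|: \bigcup_(A in H) [set A; ~: A] /\
  (0 < n -> #|cl r H| <= 2 * (r + 1) * n ^ r + 2 * #|H|).
Proof.
move=> crossH; rewrite cl_cross_free // cl_set0; split=> // n_gt0.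
apply: leq_trans (leq_card_setU _ _) _.
by rewrite leq_add ?card_small_or_cosmall ?card_compl_pairs.
Qed.
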